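(* Let $\alpha_1,\alpha_2$ be nonzero real constants with $\alpha_1\neq\alpha_2$, and consider the lattice Schwarzian KdV equation for a field $x_{n,m}$, $(n,m)\in\mathbb{Z}^2$: $$\mathbb{Q}\equiv \alpha_1 (x_{n,m}-x_{n,m+1})(x_{n+1,m}-x_{n+1,m+1})-\alpha_2 (x_{n,m}-x_{n+1,m})(x_{n,m+1}-x_{n+1,m+1})=0.$$ Consider infinitesimal generators of the form $\widehat X_{n,m}=\Phi_{n,m}(x_{n,m})\,\partial_{x_{n,m}}$, where for each $(n,m)$ the function $\Phi_{n,m}$ is a polynomial $\Phi_{n,m}(x)=\sum_{k=0}^{\gamma}\Phi^{(k)}_{n,m}x^k$ with coefficients $\Phi^{(k)}_{n,m}$ depending on $(n,m)$. Then $\widehat X_{n,m}$ is a Lie point symmetry of $\mathbb{Q}=0$ if and only if $$\Phi_{n,m}(x)=c_0+c_1 x+c_2 x^2$$ with constants $c_0,c_1,c_2$ independent of $n$ and $m$. Equivalently, the Lie point symmetry algebra (of this form) is spanned by $\widehat X^{(0)}=\partial_{x_{n,m}}$, $\widehat X^{(1)}=x_{n,m}\partial_{x_{n,m}}$, $\widehat X^{(2)}=x_{n,m}^2\partial_{x_{n,m}}$, which satisfy $[\widehat X^{(0)},\widehat X^{(1)}]=\widehat X^{(0)}$, $[\widehat X^{(1)},\widehat X^{(2)}]=\widehat X^{(2)}$, $[\widehat X^{(0)},\widehat X^{(2)}]=2\widehat X^{(1)}$, i.e. form a Lie algebra isomorphic to $\mathfrak{sl}(2)$.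
   Context: A generator $\widehat X_{n,m}=\Phi_{n,m}\,\partial_{x_{n,m}}$ is called a (Lie point) symmetry of $\mathbb{Q}=0$ if its prolongation annihilates $\mathbb{Q}$ on solutions, i.e. $$\Phi_{n,m}\frac{\partial \mathbb{Q}}{\partial x_{n,m}}+\Phi_{n+1,m}\frac{\partial \mathbb{Q}}{\partial x_{n+1,m}}+\Phi_{n,m+1}\frac{\partial \mathbb{Q}}{\partial x_{n,m+1}}+\Phi_{n+1,m+1}\frac{\partial \mathbb{Q}}{\partial x_{n+1,m+1}}=0$$ whenever $\mathbb{Q}=0$ (concretely: after solving $\mathbb{Q}=0$ for $x_{n+1,m+1}$ in terms of $x_{n,m},x_{n+1,m},x_{n,m+1}$ and substituting, the expression vanishes identically in $x_{n,m},x_{n+1,m},x_{n,m+1}$). Here $\Phi_{n+i,m+j}$ denotes $\Phi_{n+i,m+j}(x_{n+i,m+j})$. *)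

From HB Require Import structures.
From mathcomp Require Import all_boot all_order all_algebra.
From mathcomp Require Import reals.
Set Implicit Arguments. Unset Strict Implicit. Unset Printing Implicit Defensive.
Import Order.TTheory GRing.Theory Num.Theory.
Local Open Scope ring_scope.

Section LSKdV.
Variable R : realType.
Variables al1 al2 : R.

(* Q(a,b,c,d) with a = x_{n,m}, b = x_{n+1,m}, c = x_{n,m+1}, d = x_{n+1,m+1} *)
Definition lskdvQ (a b c d : R) : R :=
  al1 * (a - c) * (b - d) - al2 * (a - b) * (c - d).

Definition dQ_a (a b c d : R) : R := al1 * (b - d) - al2 * (c - d).
Definition dQ_b (a b c d : R) : R := al1 * (a - c) + al2 * (c - d).
Definition dQ_c (a b c d : R) : R := - al1 * (b - d) - al2 * (a - b).
Definition dQ_d (a b c d : R) : R := - al1 * (a - c) + al2 * (a - b).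

(* Q = A * d + B, with A the coefficient of x_{n+1,m+1}. *)
Definition lskdvA (a b c : R) : R := al2 * (a - b) - al1 * (a - c).
Definition lskdvB (a b c : R) : R := al1 * (a - c) * b - al2 * (a - b) * c.
(* The solution of Q = 0 for x_{n+1,m+1} (when lskdvA a b c != 0). *)
Definition lskdv_x11 (a b c : R) : R := - lskdvB a b c / lskdvA a b c.

(* Lie point symmetry condition for the generator Phi_{n,m}(x_{n,m}) d_{x_{n,m}}:
   after solving Q = 0 for x_{n+1,m+1} and substituting, the prolonged
   generator applied to Q vanishes identically in x_{n,m}, x_{n+1,m}, x_{n,m+1}
   (i.e. at every point where the solving is possible). *)
Definition is_lie_point_symmetry (Phi : int -> int -> {poly R}) : Prop :=
  forall (n m : int) (a b c : R), lskdvA a b c != 0 ->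
    let d := lskdv_x11 a b c in
    (Phi n m).[a] * dQ_a a b c d
    + (Phi (n + 1) m).[b] * dQ_b a b c d
    + (Phi n (m + 1)).[c] * dQ_c a b c d
    + (Phi (n + 1) (m + 1)).[d] * dQ_d a b c d = 0.
End LSKdV.

(* Lie bracket of one-component vector fields f d_x and g d_x:
   [f d_x, g d_x] = (f g' - g f') d_x. *)
Definition vf_bracket (R : ringType) (f g : {poly R}) : {poly R} :=
  f * g^`() - g * f^`().

From HB Require Import structures.
From mathcomp Require Import all_boot all_order all_algebra.
From mathcomp Require Import reals.
From mathcomp Require Import ring.
Set Implicit Arguments. Unset Strict Implicit. Unset Printing Implicit Defensive.
Import Order.TTheory GRing.Theory Num.Theory.
Local Open Scope ring_scope.

(* A generator is a symmetry iff on every quad the prolongation of the four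
   corner generators vanishes on the solutions of Q = 0.  At the degenerate
   solutions (x, x + 1, x, x), (x, x, x + 1, x), (x - 1, x, x, x) three corners
   coincide, and the resulting linear system forces the four corner polynomials
   to agree; hence Phi is one polynomial F on the whole lattice.  The
   prolongation of a quadratic generator is (2 c1 + c2 (a + b + c + d)) Q, which
   gives sufficiency.  Conversely, along the solutions
   (0, D s, k D s, (al1 - al2) k s), D = al1 k - al2, the prolongation is s times
   a polynomial in s whose coefficients are F_i w_i(k); for i >= 3, D w_i is a
   nonzero polynomial in k (it is k^2 times a polynomial not vanishing at 0),
   so F_i = 0. *)

Lemma poly_eq0_nonzero_roots (R : numDomainType) (p : {poly R}) :
  (forall t, t != 0 -> p.[t] = 0) -> p = 0.
Proof.
move=> p0; apply/eqP; apply: contraT => pN0.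
pose rs := [seq i.+1%:R : R | i <- iota 0 (size p)].
have rs_roots : all (root p) rs.
  by apply/allP => _ /mapP[i _ ->]; apply/rootP/p0; rewrite pnatr_eq0.
have rs_uniq : uniq rs.
  by rewrite map_inj_uniq ?iota_uniq // => i j /eqP; rewrite eqr_nat => /eqP [].
by have := max_poly_roots pN0 rs_roots rs_uniq; rewrite size_map size_iota ltnn.
Qed.

Lemma eq_poly_horner (R : numDomainType) (p q : {poly R}) :
  (forall t, p.[t] = q.[t]) -> p = q.
Proof.
move=> pq; apply/eqP; rewrite -subr_eq0; apply/eqP/poly_eq0_nonzero_roots => t _.
by rewrite hornerD hornerN pq subrr.
Qed.

Lemma monomial_sum_eq0 (R : numDomainType) (n : nat) (u : nat -> R) :
  (forall s, s != 0 -> \sum_(i < n) u i * s ^+ i = 0) ->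
  forall i, (i < n)%N -> u i = 0.
Proof.
move=> u0 i lt_in.
have poly0 : \poly_(j < n) u j = 0.
  by apply: poly_eq0_nonzero_roots => s /u0 <-; rewrite horner_poly.
by have := congr1 (fun p : {poly R} => p`_i) poly0; rewrite /= coef_poly lt_in coef0.
Qed.

Lemma int_shift_invariant (T : Type) (f : int -> T) :
  (forall n, f (n + 1) = f n) -> forall n, f n = f 0.
Proof.
move=> fS; elim/int_rect => [//|n <-|n <-].
  by rewrite intS addrC fS.
by rewrite -fS; congr f; rewrite intS; ring.
Qed.

Section LatticeSchwarzianKdV.
Variables (R : realType) (al1 al2 : R).

Definition lskdv_prolong (p q r s : {poly R}) (a b c d : R) : R :=
  p.[a] * dQ_a al1 al2 a b c d + q.[b] * dQ_b al1 al2 a b c d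
  + r.[c] * dQ_c al1 al2 a b c d + s.[d] * dQ_d al1 al2 a b c d.

(* [is_lie_point_symmetry al1 al2 Phi] is, by conversion, this condition on every
   quad (Phi n m, Phi (n + 1) m, Phi n (m + 1), Phi (n + 1) (m + 1)). *)
Definition lskdv_quad_symmetry (p q r s : {poly R}) : Prop :=
  forall a b c, lskdvA al1 al2 a b c != 0 ->
    lskdv_prolong p q r s a b c (lskdv_x11 al1 al2 a b c) = 0.

Lemma lskdvQ_affine a b c d :
  lskdvQ al1 al2 a b c d = lskdvA al1 al2 a b c * d + lskdvB al1 al2 a b c.
Proof. rewrite /lskdvQ /lskdvA /lskdvB; ring. Qed.

Lemma lskdvQ_x11 a b c : lskdvA al1 al2 a b c != 0 ->
  lskdvQ al1 al2 a b c (lskdv_x11 al1 al2 a b c) = 0.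
Proof. by move=> A0; rewrite lskdvQ_affine /lskdv_x11; field. Qed.

Lemma lskdv_x11_unique a b c d : lskdvA al1 al2 a b c != 0 ->
  lskdvQ al1 al2 a b c d = 0 -> lskdv_x11 al1 al2 a b c = d.
Proof.
move=> A0 /eqP; rewrite lskdvQ_affine addr_eq0 => /eqP Ad.
by rewrite /lskdv_x11 -Ad mulrC mulKf.
Qed.

Lemma lskdv_quad_symmetry_on_solutions (p q r s : {poly R}) :
  lskdv_quad_symmetry p q r s ->
  forall a b c d, lskdvA al1 al2 a b c != 0 -> lskdvQ al1 al2 a b c d = 0 ->
  lskdv_prolong p q r s a b c d = 0.
Proof. by move=> sym a b c d A0 /(lskdv_x11_unique A0) <-; apply: sym. Qed.

Lemma lskdv_prolong_quadratic (c0 c1 c2 : R) a b c d :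
  let q := c0%:P + c1 *: 'X + c2 *: 'X^2 in
  lskdv_prolong q q q q a b c d =
    (c1 *+ 2 + c2 * (a + b + c + d)) * lskdvQ al1 al2 a b c d.
Proof.
rewrite /lskdv_prolong !(hornerD, hornerC, hornerZ, hornerX, hornerXn).
by rewrite /dQ_a /dQ_b /dQ_c /dQ_d /lskdvQ; ring.
Qed.

Lemma lskdv_quadratic_symmetry (c0 c1 c2 : R) :
  let q := c0%:P + c1 *: 'X + c2 *: 'X^2 in lskdv_quad_symmetry q q q q.
Proof. by move=> q a b c A0; rewrite lskdv_prolong_quadratic lskdvQ_x11 ?mulr0. Qed.

Hypotheses (al1_neq0 : al1 != 0) (al2_neq0 : al2 != 0) (al12_neq : al1 != al2).

Lemma lskdv_corner_system u v w z :
  al1 * u - (al1 - al2) * w - al2 * z = 0 ->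
  - al2 * u - (al1 - al2) * v + al1 * z = 0 ->
  - al1 * v + al2 * w + (al1 - al2) * z = 0 ->
  [/\ v = u, w = u & z = u].
Proof.
move=> E1 E2 E3.
have al12_neq0 : al1 - al2 != 0 by rewrite subr_eq0.
have zu : z = u.
  have : 2%:R * al1 * al2 * (z - u) =
    al1 * (- al2 * u - (al1 - al2) * v + al1 * z)
    - al2 * (al1 * u - (al1 - al2) * w - al2 * z)
    - (al1 - al2) * (- al1 * v + al2 * w + (al1 - al2) * z) by ring.
  rewrite E1 E2 E3 !mulr0 !subr0 => /eqP.
  by rewrite !mulf_eq0 pnatr_eq0 (negbTE al1_neq0) (negbTE al2_neq0) subr_eq0 => /eqP.
split=> //; apply/eqP; rewrite -subr_eq0.
  have : (al1 - al2) * (v - u) = - (- al2 * u - (al1 - al2) * v + al1 * z)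
    + al1 * (z - u) by ring.
  by rewrite E2 zu subrr !mulr0 oppr0 add0r => /eqP; rewrite mulf_eq0 (negbTE al12_neq0).
have : (al1 - al2) * (w - u) = - (al1 * u - (al1 - al2) * w - al2 * z)
  - al2 * (z - u) by ring.
by rewrite E1 zu subrr !mulr0 oppr0 addr0 => /eqP; rewrite mulf_eq0 (negbTE al12_neq0).
Qed.

Lemma lskdv_quad_symmetry_corners (p q r s : {poly R}) :
  lskdv_quad_symmetry p q r s -> [/\ q = p, r = p & s = p].
Proof.
move=> /lskdv_quad_symmetry_on_solutions sym.
have values x : [/\ q.[x] = p.[x], r.[x] = p.[x] & s.[x] = p.[x]].
  rewrite /lskdv_prolong /dQ_a /dQ_b /dQ_c /dQ_d /lskdvQ in sym.
  apply: lskdv_corner_system.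
  - rewrite -(sym x (x + 1) x x); [ring | | ring].
    have -> : lskdvA al1 al2 x (x + 1) x = - al2 by rewrite /lskdvA; ring.
    by rewrite oppr_eq0.
  - rewrite -(sym x x (x + 1) x); [ring | | ring].
    by have -> : lskdvA al1 al2 x x (x + 1) = al1 by rewrite /lskdvA; ring.
  - rewrite -(sym (x - 1) x x x); [ring | | ring].
    have -> : lskdvA al1 al2 (x - 1) x x = al1 - al2 by rewrite /lskdvA; ring.
    by rewrite subr_eq0.
by split; apply: eq_poly_horner => x; case: (values x).
Qed.

Lemma lskdv_symmetry_const (Phi : int -> int -> {poly R}) :
  is_lie_point_symmetry al1 al2 Phi -> forall n m, Phi n m = Phi 0 0.
Proof.
move=> sym.
have step n m : Phi (n + 1) m = Phi n m /\ Phi n (m + 1) = Phi n m.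
  have quad : lskdv_quad_symmetry (Phi n m) (Phi (n + 1) m) (Phi n (m + 1))
    (Phi (n + 1) (m + 1)) := sym n m.
  by have [-> -> _] := lskdv_quad_symmetry_corners quad.
move=> n m.
rewrite (int_shift_invariant (f := Phi^~ m)) => [|k]; last by case: (step k m).
by rewrite (int_shift_invariant (f := Phi 0)) => // k; case: (step 0 k).
Qed.

(* Coefficient of s ^+ i.+1 in the prolongation of F d_x along the solution
   (0, D s, k D s, (al1 - al2) k s) of Q = 0, where D = al1 k - al2. *)
Definition lskdv_line_coef (i : nat) (k : R) : R :=
  let D := al1 * k - al2 in let e := al1 - al2 in
  - al1 * al2 * (k - 1) ^+ 2 * 0 ^+ i - al1 * e * k ^+ 2 * D ^+ i
  + al2 * e * (k * D) ^+ i + D ^+ 2 * (e * k) ^+ i.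

Lemma lskdv_prolong_line (F : {poly R}) k s :
  let D := al1 * k - al2 in
  lskdv_prolong F F F F 0 (D * s) (k * D * s) ((al1 - al2) * k * s)
  = s * \sum_(i < size F) F`_i * lskdv_line_coef i k * s ^+ i.
Proof.
rewrite /lskdv_prolong; have -> : F.[0] = F.[0 * s] by rewrite mul0r.
rewrite !horner_coef !mulr_suml -!big_split mulr_sumr /=.
apply: eq_bigr => i _; rewrite /lskdv_line_coef /dQ_a /dQ_b /dQ_c /dQ_d !exprMn.
ring.
Qed.

Lemma lskdv_line_coef_eq0 (F : {poly R}) : lskdv_quad_symmetry F F F F ->
  forall k, al1 * k - al2 != 0 -> forall i, F`_i * lskdv_line_coef i k = 0.
Proof.
move=> /lskdv_quad_symmetry_on_solutions sym k D0 i.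
have [lt_iF|le_Fi] := ltnP i (size F); last by rewrite nth_default ?mul0r.
apply: (monomial_sum_eq0 (u := fun i => F`_i * lskdv_line_coef i k)) lt_iF => s s0.
apply: (mulfI s0); rewrite mulr0 -lskdv_prolong_line; apply: sym.
  have -> : lskdvA al1 al2 0 ((al1 * k - al2) * s) (k * (al1 * k - al2) * s) =
    (al1 * k - al2) ^+ 2 * s by rewrite /lskdvA; ring.
  by rewrite mulf_neq0 ?expf_neq0.
by rewrite /lskdvQ; ring.
Qed.

Lemma lskdv_line_coef_poly j :
  {W : {poly R} | W != 0 & forall k, W.[k] = (al1 * k - al2) * lskdv_line_coef j.+3 k}.
Proof.
pose D : {poly R} := al1 *: 'X - al2%:P.
pose e := al1 - al2.
pose G := - al1 * e *: D ^+ j.+4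
  + 'X^(j.+1) * (al2 * e *: D ^+ j.+4 + e ^+ j.+3 *: D ^+ 3).
exists ('X^2 * G).
  rewrite mulf_neq0 ?expf_neq0 ?polyX_eq0 //.
  have G0 : G.[0] != 0.
    rewrite /G /D /e.
    rewrite !(horner_exp, hornerXn, hornerD, hornerM, hornerZ, hornerN, hornerX, hornerC).
    rewrite [0 ^+ _]exprS !mul0r addr0 mulr0 sub0r.
    apply: mulf_neq0; last by rewrite expf_neq0 ?oppr_eq0.
    by apply: mulf_neq0; rewrite ?oppr_eq0 ?subr_eq0.
  by apply: contraNneq G0 => ->; rewrite horner0.
move=> k; rewrite /lskdv_line_coef /G /D /e.
rewrite !(horner_exp, hornerXn, hornerD, hornerM, hornerZ, hornerN, hornerX, hornerC).
rewrite expr0n /= !exprMn !exprS; ring.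
Qed.

Lemma lskdv_quad_symmetry_coef_ge3 (F : {poly R}) :
  lskdv_quad_symmetry F F F F -> forall j, F`_j.+3 = 0.
Proof.
move=> sym j; have [W W_neq0 WE] := lskdv_line_coef_poly j.
have FW0 : F`_j.+3 *: W = 0.
  apply: eq_poly_horner => k; rewrite hornerZ WE horner0.
  have [->|D0] := eqVneq (al1 * k - al2) 0; first by rewrite !mul0r mulr0.
  by rewrite mulrCA lskdv_line_coef_eq0 ?mulr0.
by move/eqP: FW0; rewrite scaler_eq0 (negbTE W_neq0) orbF => /eqP.
Qed.

Lemma lskdv_quad_symmetry_quadratic (F : {poly R}) :
  lskdv_quad_symmetry F F F F -> F = (F`_0)%:P + F`_1 *: 'X + F`_2 *: 'X^2.
Proof.
move=> /lskdv_quad_symmetry_coef_ge3 F_ge3; apply/polyP => -[|[|[|j]]];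
  by rewrite !coefE ?F_ge3 /= ?(mulr0, mulr1, addr0, add0r).
Qed.
End LatticeSchwarzianKdV.

Theorem mainTheorem1 (R : realType) (al1 al2 : R)
  (h1 : al1 != 0) (h2 : al2 != 0) (h12 : al1 != al2) :
  (forall Phi : int -> int -> {poly R},
     is_lie_point_symmetry al1 al2 Phi <->
     exists c0 c1 c2 : R, forall n m : int,
       Phi n m = c0%:P + c1 *: 'X + c2 *: 'X^2)
  /\ (vf_bracket (1 : {poly R}) 'X = 1
      /\ vf_bracket ('X : {poly R}) ('X^2) = 'X^2
      /\ vf_bracket (1 : {poly R}) ('X^2) = 2%:R *: 'X).
Proof.
split.
  move=> Phi; split=> [sym | [c0 [c1 [c2 PhiE]]] n m].
    have Phi_const := lskdv_symmetry_const h1 h2 h12 sym.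
    have quad : lskdv_quad_symmetry al1 al2 (Phi 0 0) (Phi 0 0) (Phi 0 0) (Phi 0 0).
      by have := sym 0 0; rewrite add0r (Phi_const 1 0) (Phi_const 0 1) (Phi_const 1 1).
    exists (Phi 0 0)`_0, (Phi 0 0)`_1, (Phi 0 0)`_2 => n m.
    by rewrite Phi_const -(lskdv_quad_symmetry_quadratic h1 h2 h12 quad).
  by rewrite !PhiE; apply: lskdv_quadratic_symmetry.
rewrite /vf_bracket !(derivX, derivC, derivXn) /= expr1 !mul1r !mulr0 !subr0.
by split=> //; split; [rewrite mulr2n mulrDr mulr1 -expr2 addrK | rewrite scaler_nat].
Qed.
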